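(* Let $n,m$ be positive integers, $A_1,\dots,A_m\in\mathbb{S}_n$, $\mathcal{A}(X)=(\langle A_i,X\rangle)_{i=1}^m$, $\mathcal{A}^*(y)=\sum_i y_iA_i$, with $\mathcal{A}\mathcal{A}^*$ invertible; let $b\in\mathbb{R}^m$, $C\in\mathbb{S}_n$, $D:=\mathcal{A}^*((\mathcal{A}\mathcal{A}^* )^{-1}b)$. Fix $\sigma_k>0$, $y^k\in\mathbb{R}^m$, $\widetilde{X}^k\in\mathbb{S}_n$, and let $$\Phi_k(S)=\langle D,S+C\rangle-\langle\widetilde{X}^k,\mathcal{A}^*(y^k)-S-C\rangle+\tfrac{\sigma_k}{2}\|\mathcal{A}^*(y^k)-S-C\|^2,\quad S\in\mathbb{S}_n,$$ so that $\nabla\Phi_k(S)=\widetilde{X}^k-\sigma_k(\mathcal{A}^*(y^k)-S-C)+D$. For each positive integer $q$ let $\mathcal{N}_q=\{Y\in\mathbb{R}^{n\times q}: \text{every row of }Y\text{ has Euclidean norm }1\}$ and $\Psi_k(Y)=\Phi_k(YY^{\intercal})$ for $Y\in\mathcal{N}_q$. Let $p$ be a positive integer, $Y\in\mathcal{N}_p$, $S=YY^{\intercal}$, and $X=\nabla\Phi_k(S)-\operatorname{Diag}(\nabla\Phi_k(S)S)$, and suppose $X\not\succeq0$. Let $\delta$ be a positive integer and let $V\in\mathbb{R}^{n\times\delta}$ be a matrix whose columns are eigenvectors of $X$ corresponding to negative eigenvalues. Set $\hat Y=[Y,\,0_{n\times\delta}]\in\mathcal{N}_{p+\delta}$ and $U=[0_{n\times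 p},\,V]$. Then $U$ is a tangent vector to $\mathcal{N}_{p+\delta}$ at $\hat Y$ and it is a second-order descent direction of $\Psi_k$ on $\mathcal{N}_{p+\delta}$ at $\hat Y$, namely $$\langle U,\operatorname{grad}\Psi_k(\hat Y)\rangle=0,\qquad\langle U,\operatorname{Hess}\Psi_k(\hat Y)[U]\rangle<0.$$
   Context: $\mathbb{S}_n$ denotes real symmetric $n\times n$ matrices, $\langle A,B\rangle=\mathrm{Tr}(A^{\intercal}B)$, $\|\cdot\|$ the Frobenius norm. For a square matrix $M$, $\operatorname{Diag}(M)$ is the diagonal matrix having the same diagonal as $M$. $\mathcal{N}_q$ (the oblique manifold) is regarded as a Riemannian submanifold of $\mathbb{R}^{n\times q}$ with the Frobenius inner product; $\operatorname{grad}$ and $\operatorname{Hess}$ denote the Riemannian gradient and Riemannian Hessian with respect to this induced metric. The tangent space at $Y$ is $\{U: \operatorname{diag}(UY^{\intercal})=0\}$. *)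

From HB Require Import structures.
From mathcomp Require Import all_boot all_order all_algebra.
From mathcomp Require Import all_classical all_reals all_analysis.
Set Implicit Arguments. Unset Strict Implicit. Unset Printing Implicit Defensive.
Import Order.TTheory GRing.Theory Num.Theory.
Import numFieldNormedType.Exports.
Local Open Scope ring_scope.

Section Defs.
Variable R : realType.

Definition frob {m n : nat} (A B : 'M[R]_(m, n)) : R := \tr (A^T *m B).
Definition frobn2 {m n : nat} (A : 'M[R]_(m, n)) : R := frob A A.

Definition Diag {n : nat} (M : 'M[R]_n) : 'M[R]_n :=
  \matrix_(i, j) (if i == j then M i j else 0).

Definition symmx {n : nat} (M : 'M[R]_n) : Prop := M^T = M.

Definition psd {n : nat} (M : 'M[R]_n) : Prop :=
  forall v : 'cV[R]_n, 0 <= (v^T *m M *m v) 0 0.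

Definition oblique {n q : nat} (Y : 'M[R]_(n, q)) : Prop :=
  forall i : 'I_n, \sum_(j < q) (Y i j) ^+ 2 = 1.

Definition tangent {n q : nat} (Y U : 'M[R]_(n, q)) : Prop :=
  forall i : 'I_n, (U *m Y^T) i i = 0.

Definition projT {n q : nat} (Y Z : 'M[R]_(n, q)) : 'M[R]_(n, q) :=
  Z - Diag (Z *m Y^T) *m Y.

Definition egrad {n q : nat} (f : 'M[R]_(n, q) -> R) (Y : 'M[R]_(n, q))
  : 'M[R]_(n, q) := \matrix_(i, j) ('D_(delta_mx i j) f Y).

Definition rgrad {n q : nat} (f : 'M[R]_(n, q) -> R) (Y : 'M[R]_(n, q))
  : 'M[R]_(n, q) := projT Y (egrad f Y).

(* Riemannian Hessian on the Riemannian submanifold N_q (Levi-Civita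
   connection of the induced metric): Hess f(Y)[U] = P_Y( D(grad f)(Y)[U] ),
   where grad f is extended to the ambient space by Z |-> P_Z(egrad f Z). *)
Definition rhess {n q : nat} (f : 'M[R]_(n, q) -> R) (Y U : 'M[R]_(n, q))
  : 'M[R]_(n, q) := projT Y ('D_U (fun Z => projT Z (egrad f Z)) Y).

Definition Astar {n m : nat} (A : 'I_m -> 'M[R]_n) (y : 'cV[R]_m) : 'M[R]_n :=
  \sum_(i < m) y i 0 *: A i.

Definition AAstar {n m : nat} (A : 'I_m -> 'M[R]_n) : 'M[R]_m :=
  \matrix_(i, j) frob (A i) (A j).

Definition Dmat {n m : nat} (A : 'I_m -> 'M[R]_n) (b : 'cV[R]_m) : 'M[R]_n :=
  Astar A (invmx (AAstar A) *m b).

Definition Phi {n m : nat} (A : 'I_m -> 'M[R]_n) (b : 'cV[R]_m) (C : 'M[R]_n)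
  (sigma : R) (y : 'cV[R]_m) (Xt : 'M[R]_n) (S : 'M[R]_n) : R :=
  frob (Dmat A b) (S + C) - frob Xt (Astar A y - S - C)
  + sigma / 2 * frobn2 (Astar A y - S - C).

Definition gradPhi {n m : nat} (A : 'I_m -> 'M[R]_n) (b : 'cV[R]_m) (C : 'M[R]_n)
  (sigma : R) (y : 'cV[R]_m) (Xt : 'M[R]_n) (S : 'M[R]_n) : 'M[R]_n :=
  Xt - sigma *: (Astar A y - S - C) + Dmat A b.

Definition Psi {n m q : nat} (A : 'I_m -> 'M[R]_n) (b : 'cV[R]_m) (C : 'M[R]_n)
  (sigma : R) (y : 'cV[R]_m) (Xt : 'M[R]_n) (Y : 'M[R]_(n, q)) : R :=
  Phi A b C sigma y Xt (Y *m Y^T).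

End Defs.

From HB Require Import structures.
From mathcomp Require Import all_boot all_order all_algebra.
From mathcomp Require Import all_classical all_reals all_analysis.
From mathcomp Require Import ring lra.
Import Order.TTheory GRing.Theory Num.Theory.
Import numFieldNormedType.Exports.
Local Open Scope ring_scope.
Set Implicit Arguments. Unset Strict Implicit. Unset Printing Implicit Defensive.

(* Since the new columns of Yhat and the old columns of U vanish, U *m Yhat^T = 0,
   so every term of the gradient or Hessian of Psi that is right-multiplied by
   Yhat is Frobenius-orthogonal to U. The Euclidean gradient of Psi at Z is
   2 G Z with G = gradPhi (Z Z^T), which gives <U, grad Psi> = 0, and the only
   surviving Hessian terms give <U, Hess Psi [U]> = 2 <V, X V> < 0 because the
   columns of V are eigenvectors of X for negative eigenvalues. *)

Section MatrixDerivatives.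
Context {R : realType} {V : normedModType R}.
Implicit Types (x v : V) (a b c : nat).

Lemma is_derive_mxP a b (M : V -> 'M[R]_(a, b)) x v (dM : 'M[R]_(a, b)) :
  is_derive x v M dM <-> forall i j, is_derive x v (fun z => M z i j) (dM i j).
Proof.
split=> [[dM_ex <-] i j | dMij].
  have dMij_ex : derivable (fun z => M z i j) x v by move/derivable_mxP: dM_ex.
  by rewrite derive_mx // mxE; apply: derivableP.
have dM_ex : derivable M x v by apply/derivable_mxP => i j; case: (dMij i j).
split=> //; rewrite derive_mx //; apply/matrixP => i j.
by rewrite mxE derive_val.
Qed.

Lemma is_derive_mulmx a b c (M : V -> 'M[R]_(a, b)) (N : V -> 'M[R]_(b, c))
    x v dM dN :
  is_derive x v M dM -> is_derive x v N dN ->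
  is_derive x v (fun z => M z *m N z) (dM *m N x + M x *m dN).
Proof.
move=> /is_derive_mxP dM_ij /is_derive_mxP dN_ij; apply/is_derive_mxP => i j.
under eq_fun do rewrite mxE.
have dMN_k k : is_derive x v (fun z => M z i k * N z k j)
    (dM i k * N x k j + M x i k * dN k j).
  apply: is_derive_eq (is_deriveM (dM_ij i k) (dN_ij k j)) _.
  by rewrite addrC /GRing.scale /= mulrC.
rewrite -fct_sumE !mxE -big_split /=; exact: is_derive_sum.
Qed.

Lemma is_derive_trmx a b (M : V -> 'M[R]_(a, b)) x v dM :
  is_derive x v M dM -> is_derive x v (fun z => (M z)^T) dM^T.
Proof.
move=> /is_derive_mxP dM_ij; apply/is_derive_mxP => i j.
by under eq_fun do rewrite mxE; rewrite mxE.
Qed.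

Lemma is_derive_Diag a (M : V -> 'M[R]_a) x v dM :
  is_derive x v M dM -> is_derive x v (fun z => Diag (M z)) (Diag dM).
Proof.
move=> /is_derive_mxP dM_ij; apply/is_derive_mxP => i j.
under eq_fun do rewrite mxE; rewrite mxE.
by case: eqP => _; [exact: dM_ij | exact: is_derive_cst].
Qed.

Lemma is_derive_mxtrace a (M : V -> 'M[R]_a) x v dM :
  is_derive x v M dM -> is_derive x v (fun z => \tr (M z)) (\tr dM).
Proof.
move=> /is_derive_mxP dM_ij; rewrite /mxtrace -fct_sumE.
exact: is_derive_sum.
Qed.

Lemma is_derive_frob a b (M N : V -> 'M[R]_(a, b)) x v dM dN :
  is_derive x v M dM -> is_derive x v N dN ->
  is_derive x v (fun z => frob (M z) (N z)) (frob dM (N x) + frob (M x) dN).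
Proof.
move=> dM_ex dN_ex; rewrite /frob -mxtraceD.
by apply/is_derive_mxtrace/is_derive_mulmx => //; apply: is_derive_trmx.
Qed.

End MatrixDerivatives.

Section Frobenius.
Context {R : realType}.
Implicit Types a b c : nat.

Lemma frobC a b (M N : 'M[R]_(a, b)) : frob M N = frob N M.
Proof. by rewrite /frob -mxtrace_tr trmx_mul trmxK. Qed.

Lemma frobDr a b (M N P : 'M[R]_(a, b)) : frob M (N + P) = frob M N + frob M P.
Proof. by rewrite /frob mulmxDr mxtraceD. Qed.

Lemma frobBr a b (M N P : 'M[R]_(a, b)) : frob M (N - P) = frob M N - frob M P.
Proof. by rewrite /frob mulmxBr linearB. Qed.

Lemma frobZr a b k (M N : 'M[R]_(a, b)) : frob M (k *: N) = k * frob M N.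
Proof. by rewrite /frob -scalemxAr mxtraceZ. Qed.

Lemma frobNr a b (M N : 'M[R]_(a, b)) : frob M (- N) = - frob M N.
Proof. by rewrite /frob mulmxN linearN. Qed.

Lemma frobDl a b (M N P : 'M[R]_(a, b)) : frob (M + N) P = frob M P + frob N P.
Proof. by rewrite frobC frobDr !(frobC P). Qed.

Lemma frobBl a b (M N P : 'M[R]_(a, b)) : frob (M - N) P = frob M P - frob N P.
Proof. by rewrite frobC frobBr !(frobC P). Qed.

Lemma frobZl a b k (M N : 'M[R]_(a, b)) : frob (k *: M) N = k * frob M N.
Proof. by rewrite frobC frobZr frobC. Qed.

Lemma frob0l a b (M : 'M[R]_(a, b)) : frob 0 M = 0.
Proof. by rewrite /frob trmx0 mul0mx mxtrace0. Qed.

Lemma frob_mulmxl a b c (M : 'M[R]_(a, c)) (N : 'M[R]_(a, b)) (P : 'M[R]_(b, c)) :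
  frob M (N *m P) = frob (N^T *m M) P.
Proof. by rewrite /frob trmx_mul trmxK mulmxA. Qed.

Lemma frob_mulmxr a b c (M : 'M[R]_(a, c)) (N : 'M[R]_(a, b)) (P : 'M[R]_(b, c)) :
  frob M (N *m P) = frob (M *m P^T) N.
Proof. by rewrite /frob trmx_mul trmxK mulmxA mxtrace_mulC mulmxA. Qed.

Lemma frob_row_mx a b c (M N : 'M[R]_(a, b)) (P Q : 'M[R]_(a, c)) :
  frob (row_mx M P) (row_mx N Q) = frob M N + frob P Q.
Proof.
rewrite /frob mxtrace_mulC tr_row_mx mul_row_col mxtraceD.
by rewrite !(mxtrace_mulC _ (_^T)).
Qed.

Lemma frob_delta_mx a b (M : 'M[R]_(a, b)) i j : frob M (delta_mx i j) = M i j.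
Proof.
rewrite /frob /mxtrace (bigD1 j) //= big1 ?addr0.
  rewrite mxE (bigD1 i) //= big1 ?addr0; first by rewrite !mxE !eqxx mulr1.
  by move=> k /negbTE kn; rewrite !mxE kn mulr0.
move=> k /negbTE kn; rewrite mxE big1 // => l _.
by rewrite !mxE kn andbF mulr0.
Qed.

Lemma cV_trmx_mul_gt0 a (u : 'cV[R]_a) : u != 0 -> 0 < (u^T *m u) 0 0.
Proof.
move=> u_neq0; rewrite mxE lt_def sumr_ge0 ?andbT => [|k _]; last first.
  by rewrite mxE -expr2 sqr_ge0.
apply: contraNneq u_neq0 => /eqP; rewrite psumr_eq0 => [/allP u_eq0|k _]; last first.
  by rewrite mxE -expr2 sqr_ge0.
apply/eqP/matrixP => k l; rewrite ord1 !mxE.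
have /implyP/(_ isT) := u_eq0 k (mem_index_enum k).
by rewrite mxE -expr2 sqrf_eq0 => /eqP.
Qed.

Lemma frob_mulmx_neg_eigenvectors a d (M : 'M[R]_a) (W : 'M[R]_(a, d)) :
  (0 < d)%N ->
  (forall j, col j W != 0 /\ exists lam : R, lam < 0 /\ M *m col j W = lam *: col j W) ->
  frob W (M *m W) < 0.
Proof.
move=> d_gt0 eigW.
have diag_lt0 j : (W^T *m (M *m W)) j j < 0.
  have [Wj_neq0 [lam [lam_lt0 eigWj]]] := eigW j.
  have -> : (W^T *m (M *m W)) j j = lam * ((col j W)^T *m col j W) 0 0.
    have colMW : col j (M *m W) = lam *: col j W by rewrite colE -mulmxA -colE eigWj.
    rewrite !mxE mulr_sumr; apply: eq_bigr => k _.
    have := congr1 (fun u : 'cV_a => u k 0) colMW; rewrite !mxE => ->.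
    by rewrite mulrCA.
  by rewrite nmulr_rlt0 // cV_trmx_mul_gt0.
have : \tr (W^T *m (M *m W)) < \sum_(j < d) 0.
  apply: ltr_sum => [|j _]; last exact: diag_lt0.
  by apply/hasP; exists (Ordinal d_gt0); rewrite ?mem_index_enum.
by rewrite big1_eq.
Qed.

Lemma frob_mulmx_eq0 a b c (U : 'M[R]_(a, b)) (Z : 'M[R]_(c, b)) K :
  U *m Z^T = 0 -> frob U (K *m Z) = 0.
Proof. by move=> UZ; rewrite frob_mulmxr UZ frob0l. Qed.

End Frobenius.

Lemma oblique_row_mx0 (R : realType) n p d (Y : 'M[R]_(n, p)) :
  oblique Y -> oblique (row_mx Y (0 : 'M[R]_(n, d))).
Proof.
move=> Y_obl i; rewrite big_split_ord /= -[RHS](Y_obl i) -[RHS]addr0.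
congr (_ + _); first by apply: eq_bigr => j _; rewrite row_mxEl.
by apply: big1 => j _; rewrite row_mxEr mxE expr0n.
Qed.

Lemma DiagD (R : realType) a (M N : 'M[R]_a) : Diag (M + N) = Diag M + Diag N.
Proof. by apply/matrixP => i j; rewrite !mxE; case: eqP; rewrite ?addr0. Qed.

Lemma is_derive_mulmx_tr (R : realType) a b (Z U : 'M[R]_(a, b)) :
  is_derive Z U (fun W => W *m W^T) (U *m Z^T + Z *m U^T).
Proof. by apply: is_derive_mulmx => //; apply: is_derive_trmx. Qed.

Lemma is_derive_projT (R : realType) a b (F : 'M[R]_(a, b) -> 'M[R]_(a, b)) Z U dF :
  is_derive Z U F dF ->
  is_derive Z U (fun W => projT W (F W))
    (dF - (Diag (dF *m Z^T + F Z *m U^T) *m Z + Diag (F Z *m Z^T) *m U)).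
Proof.
move=> dF_ex; apply: is_deriveB => //.
apply: is_derive_mulmx => //; apply: is_derive_Diag.
by apply: is_derive_mulmx => //; apply: is_derive_trmx.
Qed.

Section AugmentedLagrangian.
Variables (R : realType) (n m : nat) (A : 'I_m -> 'M[R]_n) (b : 'cV[R]_m)
  (C : 'M[R]_n) (sigma : R) (y : 'cV[R]_m) (Xt : 'M[R]_n).

Local Notation Phik := (Phi A b C sigma y Xt).
Local Notation gradPhik := (gradPhi A b C sigma y Xt).

Lemma is_derive_residual (V : normedModType R) (S : V -> 'M[R]_n) x v dS :
  is_derive x v S dS -> is_derive x v (fun z => Astar A y - S z - C) (- dS).
Proof.
move=> dS_ex; apply: is_derive_eq
  (is_deriveB (is_deriveB (is_derive_cst (Astar A y) x v) dS_ex) (is_derive_cst C x v)) _.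
by rewrite sub0r subr0.
Qed.

Lemma is_derive_Phi (V : normedModType R) (S : V -> 'M[R]_n) x v dS :
  is_derive x v S dS ->
  is_derive x v (fun z => Phik (S z)) (frob (gradPhik (S x)) dS).
Proof.
move=> dS_ex; have dE := is_derive_residual dS_ex.
have dSC : is_derive x v (fun z => S z + C) dS.
  by apply: is_derive_eq (is_deriveD dS_ex (is_derive_cst C x v)) _; rewrite addr0.
apply: is_derive_eq (is_deriveD
    (is_deriveB (is_derive_frob (is_derive_cst (Dmat A b) x v) dSC)
                (is_derive_frob (is_derive_cst Xt x v) dE))
    (is_deriveM (is_derive_cst (sigma / 2) x v) (is_derive_frob dE dE))) _.
rewrite /gradPhi [RHS]frobDl [frob (Xt - _) _]frobBl frobZl.
move: (Astar A y - S x - C) => E.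
rewrite !frob0l !add0r scaler0 addr0 (frobC (- dS)) !frobNr.
by rewrite /GRing.scale /= (frobC E); field.
Qed.

Lemma is_derive_gradPhi (V : normedModType R) (S : V -> 'M[R]_n) x v dS :
  is_derive x v S dS -> is_derive x v (fun z => gradPhik (S z)) (sigma *: dS).
Proof.
move=> dS_ex; apply: is_derive_eq (is_deriveD
    (is_deriveB (is_derive_cst Xt x v) (is_deriveZ sigma (is_derive_residual dS_ex)))
    (is_derive_cst (Dmat A b) x v)) _.
by rewrite addr0 sub0r scalerN opprK.
Qed.

Lemma symmx_Astar (z : 'cV[R]_m) : (forall i, symmx (A i)) -> symmx (Astar A z).
Proof.
move=> A_sym; apply/matrixP => i j; rewrite mxE !summxE.
by apply: eq_bigr => k _; rewrite !mxE -[in RHS](A_sym k) mxE.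
Qed.

Lemma symmx_gradPhi S : (forall i, symmx (A i)) -> symmx C -> symmx Xt ->
  symmx S -> symmx (gradPhik S).
Proof.
move=> A_sym C_sym Xt_sym S_sym.
by rewrite /symmx /gradPhi /Dmat !linearD !linearN !linearZ /=
  !symmx_Astar // C_sym Xt_sym S_sym.
Qed.

Variable q : nat.
Local Notation Psik := (Psi (q := q) A b C sigma y Xt).

Lemma egrad_Psi Z :
  egrad Psik Z = (gradPhik (Z *m Z^T) + (gradPhik (Z *m Z^T))^T) *m Z.
Proof.
apply/matrixP => i j; rewrite mxE /Psi.
have [_ ->] := is_derive_Phi (is_derive_mulmx_tr Z (delta_mx i j)).
rewrite frobDr frob_mulmxr frob_mulmxr trmxK frob_delta_mx trmxK frobC frob_mulmxl.
by rewrite frob_delta_mx (mulmxDl (gradPhik _)) [RHS]mxE.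
Qed.

Lemma frob_rgrad_Psi_eq0 Z U : U *m Z^T = 0 -> frob U (rgrad Psik Z) = 0.
Proof.
by move=> UZ; rewrite /rgrad egrad_Psi /projT frobBr !frob_mulmx_eq0 // subr0.
Qed.

Lemma frob_rhess_Psi Z U : (forall i, symmx (A i)) -> symmx C -> symmx Xt ->
  U *m Z^T = 0 ->
  frob U (rhess Psik Z U) =
  2 * frob U ((gradPhik (Z *m Z^T) - Diag (gradPhik (Z *m Z^T) *m (Z *m Z^T))) *m U).
Proof.
move=> A_sym C_sym Xt_sym UZ.
set G := gradPhik (Z *m Z^T); set dS := U *m Z^T + Z *m U^T.
have G_sym : G^T = G by apply: symmx_gradPhi => //; rewrite /symmx trmx_mul trmxK.
have dGGt : is_derive Z U (fun W => gradPhik (W *m W^T) + (gradPhik (W *m W^T))^T)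
    (sigma *: dS + (sigma *: dS)^T).
  by apply: is_deriveD; [|apply: is_derive_trmx];
    apply: is_derive_gradPhi; apply: is_derive_mulmx_tr.
rewrite /rhess (funext egrad_Psi).
have [_ ->] := is_derive_projT (is_derive_mulmx dGGt (is_derive_id Z U)).
rewrite /projT -/G G_sym !(frobBr, frobDr, frobNr, frob_mulmx_eq0 _ UZ) -mulmxA.
clearbody G; rewrite mulmxBl frobBr !mulmxDl DiagD mulmxDl !frobDr.
lra.
Qed.

End AugmentedLagrangian.

Unset Implicit Arguments.

Theorem theorem4p5 (R : realType) (n m : nat) (A : 'I_m -> 'M[R]_n)
  (b : 'cV[R]_m) (C : 'M[R]_n) (sigma : R) (y : 'cV[R]_m) (Xt : 'M[R]_n)
  (p delta : nat) (Y : 'M[R]_(n, p)) (V : 'M[R]_(n, delta)) :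
  (0 < n)%N -> (0 < m)%N ->
  (forall i, symmx (A i)) -> AAstar A \in unitmx ->
  symmx C -> 0 < sigma -> symmx Xt ->
  (0 < p)%N -> oblique Y ->
  let S := Y *m Y^T in
  let G := gradPhi A b C sigma y Xt S in
  let X := G - Diag (G *m S) in
  ~ psd X ->
  (0 < delta)%N ->
  (forall j : 'I_delta, col j V != 0 /\
     exists lam : R, lam < 0 /\ X *m col j V = lam *: col j V) ->
  let Yhat : 'M[R]_(n, p + delta) := row_mx Y 0 in
  let U : 'M[R]_(n, p + delta) := row_mx 0 V in
  let Psik := Psi (q := (p + delta)%N) A b C sigma y Xt in
  oblique Yhat /\ tangent Yhat U /\
  frob U (rgrad Psik Yhat) = 0 /\
  frob U (rhess Psik Yhat U) < 0.
Proof.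
move=> _ _ A_sym _ C_sym _ Xt_sym _ Y_obl S G X _ delta_gt0 V_eig Yhat U Psik.
have UYhat : U *m Yhat^T = 0.
  by rewrite tr_row_mx mul_row_col trmx0 mul0mx mulmx0 addr0.
have YhatYhat : Yhat *m Yhat^T = S.
  by rewrite tr_row_mx mul_row_col trmx0 mulmx0 addr0.
split; first exact: oblique_row_mx0.
split; first by move=> i; rewrite UYhat mxE.
split; first exact: frob_rgrad_Psi_eq0.
rewrite frob_rhess_Psi // YhatYhat -/G -/X pmulr_rlt0 //.
rewrite mul_mx_row mulmx0 frob_row_mx frob0l add0r.
exact: frob_mulmx_neg_eigenvectors.
Qed.
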